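(* Let $G=(V,R,E)$ be a finite bipartite version–record graph with version tree $\mathbb{T}$ satisfying the standing assumptions below, and let $0<\delta\le1$. Then the algorithm LyreSplit with parameter $\delta$ (described below) outputs a partition of $V$ into blocks $\mathcal{V}_1,\dots,\mathcal{V}_K$ whose storage cost satisfies $\mathcal{S}=\sum_k|\mathcal{R}_k|\le(1+\delta)^{\ell}|R|$ and whose average checkout cost satisfies $\mathcal{C}_{avg}=\frac{1}{|V|}\sum_k|\mathcal{V}_k||\mathcal{R}_k|\le\frac{1}{\delta}\cdot\frac{|E|}{|V|}$; i.e., it is a $((1+\delta)^{\ell},\frac1\delta)$-approximation, where $\ell$ is the recursion level at which the algorithm terminates.
   Context: $(v,r)\in E$ means version $v$ contains record $r$; $R(v)=\{r:(v,r)\in E\}$ and $R=\bigcup_v R(v)$. $\mathbb{T}$ is a rooted tree on $V$ (edges parent$\to$child) with edge weights $w(v_i,v_j)=|R(v_i)\cap R(v_j)|$. Standing assumption (no cross-version diff rule): for every record $r$, the set of versions containing $r$ is a connected subtree of $\mathbb{T}$. For a block $\mathcal{V}_k$, $\mathcal{R}_k=\bigcup_{v\in\mathcal{V}_k}R(v)$. LyreSplit on a subtree with version set $V'$, record set $R'=\bigcup_{v\in V'}R(v)$ and bipartite edge count $|E'|=\sum_{v\in V'}|R(v)|$: if $|R'||V'|<|E'|/\delta$, return $V'$ as a single block; otherwise pick any tree edge $e$ of the subtree with $w(e)\le\delta|R'|$ (such an edge exists), remove it to split the subtree into two subtrees, and recursively apply LyreSplit to each, returning the union of the resulting blocks. The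 initial call on the whole tree is at recursion level $0$, and its recursive calls are at level $1$, etc.; $\ell$ denotes the largest recursion level reached. An algorithm is an $(X,Y)$-approximation if its storage cost is at most $X\cdot|R|$ and its average checkout cost is at most $Y\cdot\frac{|E|}{|V|}$. *)

From HB Require Import structures.
From mathcomp Require Import all_boot all_order all_algebra.
Set Implicit Arguments. Unset Strict Implicit. Unset Printing Implicit Defensive.
Import Order.TTheory GRing.Theory Num.Theory.
Local Open Scope ring_scope.

(* Versions: finite type Vt; records: finite type Rc;
   bipartite edge set E : {set Vt * Rc}  ((v,r) \in E  <=>  version v contains r).
   Version tree: edge relation T (parent -> child) on Vt. *)

Section VersionGraph.
Variables (Vt Rc : finType).

Definition is_rooted_tree (T : rel Vt) (root : Vt) : Prop :=
  [/\ forall u, ~~ T u root,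
      forall v, v != root -> #|[set u | T u v]| = 1%N
    & forall v, connect T root v].

Definition tree_rel_on (T : rel Vt) (S : {set Vt}) : rel Vt :=
  [rel x y | [&& x \in S, y \in S & T x y || T y x]].

Definition tree_connected (T : rel Vt) (S : {set Vt}) : Prop :=
  forall x y, x \in S -> y \in S -> connect (tree_rel_on T S) x y.

Variable E : {set Vt * Rc}.

Definition recs (v : Vt) : {set Rc} := [set r | (v, r) \in E].
Definition recs_of (S : {set Vt}) : {set Rc} := \bigcup_(v in S) recs v.
Definition nedges (S : {set Vt}) : nat := (\sum_(v in S) #|recs v|)%N.
Definition wt (u v : Vt) : nat := #|recs u :&: recs v|.

Definition cut_rel (T : rel Vt) (S : {set Vt}) (u v : Vt) : rel Vt :=
  [rel x y | tree_rel_on T S x y &&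
             ~~ (((x == u) && (y == v)) || ((x == v) && (y == u)))].
Definition side_v (T : rel Vt) (S : {set Vt}) (u v : Vt) : {set Vt} :=
  [set x in S | connect (cut_rel T S u v) v x].
Definition side_u (T : rel Vt) (S : {set Vt}) (u v : Vt) : {set Vt} :=
  S :\: side_v T S u v.

Variable F : realFieldType.
Variable T : rel Vt.
Variable delta : F.

Definition stop_cond (S : {set Vt}) : bool :=
  (#|recs_of S|%:R * #|S|%:R < (nedges S)%:R / delta).

(* lyre S n blocks l : a (nondeterministic) run of LyreSplit on the subtree with
   version set S, called at recursion level n, returns [blocks], and the largest
   recursion level reached during this call is l. *)
Inductive lyre : {set Vt} -> nat -> seq {set Vt} -> nat -> Prop :=
| lyre_stop S n : stop_cond S -> lyre S n [:: S] n
| lyre_split S n u v b1 l1 b2 l2 :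
    ~~ stop_cond S ->
    u \in S -> v \in S -> T u v ->
    (wt u v)%:R <= delta * #|recs_of S|%:R ->
    lyre (side_u T S u v) n.+1 b1 l1 ->
    lyre (side_v T S u v) n.+1 b2 l2 ->
    lyre S n (b1 ++ b2) (maxn l1 l2).

End VersionGraph.

Definition storage_cost (Vt Rc : finType) (E : {set Vt * Rc}) (bs : seq {set Vt}) : nat :=
  (\sum_(B <- bs) #|recs_of E B|)%N.
Definition checkout_total (Vt Rc : finType) (E : {set Vt * Rc}) (bs : seq {set Vt}) : nat :=
  (\sum_(B <- bs) #|B| * #|recs_of E B|)%N.
Definition all_recs (Vt Rc : finType) (E : {set Vt * Rc}) : {set Rc} :=
  recs_of E [set: Vt].

From HB Require Import structures.
From mathcomp Require Import all_boot all_order all_algebra.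
Import Order.TTheory GRing.Theory Num.Theory.
Local Open Scope ring_scope.

Set Implicit Arguments. Unset Strict Implicit.

(* Call S tree-convex if its intersection with every connected subtree is
   connected; the whole tree is, and cutting a tree-convex S along an edge
   u -> v leaves two tree-convex sides, since a walk can only pass from one
   side to the other through that edge.  Hence a record present on both sides
   (its versions form a connected subtree) is present at u and at v, so the
   two record sets have total size at most |R'| + w(u,v) <= (1 + delta)|R'|,
   and the storage grows by a factor (1 + delta) per recursion level.  The
   checkout bound holds for every leaf block by the stopping condition, and
   the edge counts |E'| of the two sides add up to that of S. *)

Section TreeConvex.
Variables (Vt : finType) (T : rel Vt).

Lemma tree_rel_onC (A : {set Vt}) : symmetric (tree_rel_on T A).
Proof. by move=> x y; rewrite /tree_rel_on /= andbCA orbC. Qed.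

Lemma closed_tree_rel_on (A : {set Vt}) : closed (tree_rel_on T A) A.
Proof. by move=> x y /and3P[-> -> _]. Qed.

Lemma connect_tree_rel_on_mem (A : {set Vt}) x y :
  x \in A -> connect (tree_rel_on T A) x y -> y \in A.
Proof. by move=> xA /(closed_connect (@closed_tree_rel_on A)) <-. Qed.

Definition sole_exit (A P : {set Vt}) (w : Vt) : Prop :=
  forall z z', z \in A :&: P -> tree_rel_on T A z z' -> z' \notin P -> z = w.

Lemma connect_sole_exit (A P : {set Vt}) w x y :
  sole_exit A P w -> x \in A :&: P -> connect (tree_rel_on T A) x y ->
  connect (tree_rel_on T (A :&: P)) x y \/ connect (tree_rel_on T (A :&: P)) x w.
Proof.
move=> exitP xAP /connectP[p + ->] {y}; elim/last_ind: p => [|p z IHp] /=.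
  by left.
rewrite rcons_path last_rcons => /andP[/IHp [cxy|] // yz]; last by right.
have yAP := connect_tree_rel_on_mem xAP cxy.
case zP: (z \in P).
  left; apply: connect_trans cxy (connect1 _).
  by move: yz yAP; rewrite /tree_rel_on /= !inE zP andbT => /and3P[-> -> ->] /andP[_ ->].
by right; rewrite -(exitP _ z yAP yz) ?zP.
Qed.

Lemma connect_sole_exit_in (A P : {set Vt}) w x y :
  sole_exit A P w -> x \in A :&: P -> y \in A :&: P ->
  connect (tree_rel_on T A) x y -> connect (tree_rel_on T (A :&: P)) x y.
Proof.
move=> exitP xAP yAP cxy.
have symA := sym_connect_sym (tree_rel_onC A).
have symAP := sym_connect_sym (tree_rel_onC (A :&: P)).
have [//|cxw] := connect_sole_exit exitP xAP cxy.
have cyx : connect (tree_rel_on T A) y x by rewrite symA.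
have [|cyw] := connect_sole_exit exitP yAP cyx; first by rewrite symAP.
by apply: connect_trans cxw _; rewrite symAP.
Qed.

Definition tree_convex (S : {set Vt}) : Prop :=
  forall Q, tree_connected T Q -> tree_connected T (Q :&: S).

Lemma tree_convexT : tree_convex [set: Vt].
Proof. by move=> Q; rewrite setIT. Qed.

Section ConvexExit.
Variables (S P : {set Vt}) (w : Vt).
Hypotheses (convexS : tree_convex S) (sub_PS : P \subset S).
Hypothesis exitP : forall A : {set Vt}, A \subset S -> sole_exit A P w.

Lemma tree_convex_sole_exit : tree_convex P.
Proof.
move=> Q connQ x y; rewrite -(setIidPr sub_PS) setIA => xQSP yQSP.
have [xQS _] := setIP xQSP; have [yQS _] := setIP yQSP.
exact: connect_sole_exit_in (exitP (subsetIr Q S)) xQSP yQSP (convexS connQ xQS yQS).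
Qed.

Lemma sole_exit_mem (Q : {set Vt}) x y : tree_connected T Q ->
  x \in Q :&: P -> y \in Q :&: S -> y \notin P -> w \in Q.
Proof.
move=> connQ xQP yQS yNP.
have xQS : x \in Q :&: S by rewrite inE (setIP xQP).1 (subsetP sub_PS) ?(setIP xQP).2.
have xQSP : x \in Q :&: S :&: P by rewrite inE xQS (setIP xQP).2.
have [cxy|cxw] := connect_sole_exit (exitP (subsetIr Q S)) xQSP (convexS connQ xQS yQS).
  by move: (connect_tree_rel_on_mem xQSP cxy); rewrite inE (negbTE yNP) andbF.
by have /setIP[/setIP[]] := connect_tree_rel_on_mem xQSP cxw.
Qed.

End ConvexExit.

Section Cut.
Variables (S : {set Vt}) (u v : Vt).

Lemma cut_relC : symmetric (cut_rel T S u v).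
Proof.
move=> x y; rewrite /cut_rel /= tree_rel_onC.
by case: (x == u); case: (x == v); case: (y == u); case: (y == v).
Qed.

Lemma side_v_sub : side_v T S u v \subset S.
Proof. by apply/subsetP => x; rewrite inE => /andP[]. Qed.

Lemma side_u_sub : side_u T S u v \subset S.
Proof. exact: subsetDl. Qed.

Lemma side_uUv : side_u T S u v :|: side_v T S u v = S.
Proof. by rewrite -(setIidPr side_v_sub) setUC setID. Qed.

Lemma disjoint_sides : [disjoint side_u T S u v & side_v T S u v].
Proof. by rewrite disjoints_subset /side_u setDE subsetIr. Qed.

Lemma cut_rel_tree_rel_on (A : {set Vt}) z z' : A \subset S ->
  tree_rel_on T A z z' ->
  ~~ (((z == u) && (z' == v)) || ((z == v) && (z' == u))) -> cut_rel T S u v z z'.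
Proof.
move=> /subsetP sAS /and3P[/sAS zS /sAS z'S Tzz'] ncut.
by rewrite /cut_rel /tree_rel_on /= zS z'S Tzz' ncut.
Qed.

Lemma sole_exit_side_u (A : {set Vt}) : A \subset S -> sole_exit A (side_u T S u v) u.
Proof.
move=> sAS z z' /setIP[_ zu] zz' z'Nu.
have [zS z'S] : z \in S /\ z' \in S by case/and3P: zz' => /(subsetP sAS) ? /(subsetP sAS).
move: zu z'Nu; rewrite !inE zS z'S !andbT negbK /= => cvNz cvz'.
case cut: (((z == u) && (z' == v)) || ((z == v) && (z' == u))).
  by case/orP: cut => /andP[/eqP // zv _]; rewrite zv connect0 in cvNz.
suff cz'z : cut_rel T S u v z' z by rewrite (connect_trans cvz' (connect1 cz'z)) in cvNz.
by rewrite cut_relC; apply: cut_rel_tree_rel_on sAS zz' _; rewrite cut.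
Qed.

Hypothesis vS : v \in S.

Lemma sole_exit_side_v (A : {set Vt}) : A \subset S -> sole_exit A (side_v T S u v) v.
Proof.
move=> sAS z z' /setIP[_ zv] zz' z'Nv.
have vv : v \in side_v T S u v by rewrite inE vS connect0.
case cut: (((z == u) && (z' == v)) || ((z == v) && (z' == u))).
  by case/orP: cut => /andP[/eqP // _ /eqP z'v]; rewrite z'v vv in z'Nv.
move: zv z'Nv; rewrite !inE => /andP[_ cvz].
rewrite (subsetP sAS) ?(connect_trans cvz (connect1 _)) //; last by case/and3P: zz'.
by apply: cut_rel_tree_rel_on sAS zz' _; rewrite cut.
Qed.

Hypothesis convexS : tree_convex S.

Lemma tree_convex_side_u : tree_convex (side_u T S u v).
Proof. exact: tree_convex_sole_exit convexS side_u_sub sole_exit_side_u. Qed.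

Lemma tree_convex_side_v : tree_convex (side_v T S u v).
Proof. exact: tree_convex_sole_exit convexS side_v_sub sole_exit_side_v. Qed.

End Cut.
End TreeConvex.

Section Records.
Variables (Vt Rc : finType) (T : rel Vt) (E : {set Vt * Rc}).

Lemma recs_ofS (A B : {set Vt}) : A \subset B -> recs_of E A \subset recs_of E B.
Proof.
by move=> /subsetP sAB; apply/bigcupsP => x /sAB xB; apply: bigcup_sup.
Qed.

Lemma recs_ofU (A B : {set Vt}) : recs_of E (A :|: B) = recs_of E A :|: recs_of E B.
Proof.
apply/setP => r; apply/bigcupP/setUP => [[x /setUP[] xAB rx]|].
- by left; apply/bigcupP; exists x.
- by right; apply/bigcupP; exists x.
by case=> /bigcupP[x xAB rx]; exists x; rewrite // inE xAB ?orbT.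
Qed.

Lemma nedges_setD (A B : {set Vt}) : A \subset B ->
  nedges E B = (nedges E (B :\: A) + nedges E A)%N.
Proof. by move=> sAB; rewrite /nedges (big_setID A) /= (setIidPr sAB) addnC. Qed.

Lemma nedges_setT : nedges E [set: Vt] = #|E|.
Proof.
rewrite /nedges -sum1_card.
rewrite (eq_bigl (fun p => (p.1 \in [set: Vt]) && (p.2 \in recs E p.1))); last first.
  by case=> x r; rewrite !inE.
rewrite -(pair_big_dep _ (fun x r => r \in recs E x) (fun _ _ => 1%N)).
by apply: eq_bigr => x _; rewrite sum1_card.
Qed.

Hypothesis recs_connected : forall r : Rc, tree_connected T [set x | (x, r) \in E].

Lemma recs_of_sidesI (S : {set Vt}) (u v : Vt) : tree_convex T S -> v \in S ->
  recs_of E (side_u T S u v) :&: recs_of E (side_v T S u v) \subset recs E u :&: recs E v.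
Proof.
move=> convexS vS; apply/subsetP => r /setIP[/bigcupP[x xu rx] /bigcupP[y yv ry]].
set Q := [set z | (z, r) \in E].
have [xQ yQ] : x \in Q /\ y \in Q by rewrite !inE in rx ry *.
have xS := subsetP (side_u_sub T S u v) x xu; have yS := subsetP (side_v_sub T S u v) y yv.
have yNu : y \notin side_u T S u v by rewrite in_setD yv.
have xNv : x \notin side_v T S u v by move: xu; rewrite in_setD => /andP[].
have uQ : u \in Q.
  apply: (sole_exit_mem convexS (side_u_sub T S u v) (@sole_exit_side_u _ T S u v)
            (@recs_connected r) (x := x) (y := y)) => //; exact/setIP.
have vQ : v \in Q.
  apply: (sole_exit_mem convexS (side_v_sub T S u v) (sole_exit_side_v vS)
            (@recs_connected r) (x := y) (y := x)) => //; exact/setIP.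
by rewrite !inE in uQ vQ *; rewrite uQ vQ.
Qed.

Lemma card_recs_of_sides (S : {set Vt}) (u v : Vt) : tree_convex T S -> v \in S ->
  (#|recs_of E (side_u T S u v)| + #|recs_of E (side_v T S u v)|
     <= #|recs_of E S| + wt E u v)%N.
Proof.
move=> convexS vS; rewrite -cardsUI -recs_ofU; apply: leq_add.
  by apply/subset_leq_card/recs_ofS; rewrite subUset side_u_sub side_v_sub.
exact/subset_leq_card/recs_of_sidesI.
Qed.

End Records.

Section LyreSplit.
Variables (Vt Rc : finType) (F : realFieldType) (T : rel Vt) (E : {set Vt * Rc}) (delta : F).
Notation lyre := (lyre E T delta).

Lemma stop_cond_neq0 (S : {set Vt}) : stop_cond E delta S -> S != set0.
Proof.
by apply: contraTneq => ->; rewrite /stop_cond cards0 /nedges big_set0 !mul0r mulr0 ltxx.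
Qed.

Lemma lyre_partition S n bs l : lyre S n bs l ->
  [/\ \bigcup_(B <- bs) B = S, pairwise (fun A B : {set Vt} => [disjoint A & B]) bs
    & all (fun B : {set Vt} => (B != set0) && (B \subset S)) bs].
Proof.
elim=> {S n bs l} [S n stopS | S n u v b1 l1 b2 l2 _ _ _ _ _ _ [U1 P1 A1] _ [U2 P2 A2]].
  by rewrite big_seq1 /= stop_cond_neq0 // subxx.
split.
- by rewrite big_cat /= U1 U2 side_uUv.
- rewrite pairwise_cat P1 P2 !andbT; apply/allrelP => B1 B2 /(allP A1)/andP[_ sB1].
  move=> /(allP A2)/andP[_ sB2].
  exact: disjointWl sB1 (disjointWr sB2 (disjoint_sides T S u v)).
- rewrite all_cat; apply/andP; split; apply/allP => B.
    by move=> /(allP A1)/andP[-> /subset_trans]; apply; apply: side_u_sub.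
  by move=> /(allP A2)/andP[-> /subset_trans]; apply; apply: side_v_sub.
Qed.

Lemma lyre_level S n bs l : lyre S n bs l -> (n <= l)%N.
Proof.
by elim=> {S n bs l} // S n u v b1 l1 b2 l2 _ _ _ _ _ _ le_l1 _ _; rewrite leq_max (ltnW le_l1).
Qed.

Lemma lyre_checkout S n bs l : lyre S n bs l ->
  (checkout_total E bs)%:R <= (nedges E S)%:R / delta.
Proof.
elim=> {S n bs l} [S n stopS | S n u v b1 l1 b2 l2 _ _ _ _ _ _ C1 _ C2].
  by rewrite /checkout_total big_seq1 natrM mulrC ltW.
rewrite /checkout_total big_cat natrD (nedges_setD _ (side_v_sub T S u v)) natrD mulrDl.
exact: lerD.
Qed.

Hypothesis delta_ge0 : 0 <= delta.
Hypothesis recs_connected : forall r : Rc, tree_connected T [set x | (x, r) \in E].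

Lemma lyre_storage S n bs l : lyre S n bs l -> tree_convex T S ->
  (storage_cost E bs)%:R <= (1 + delta) ^+ (l - n) * #|recs_of E S|%:R.
Proof.
elim=> {S n bs l} [S n _ _ | S n u v b1 l1 b2 l2 _ _ vS _ wt_le run1 IH1 run2 IH2 convexS].
  by rewrite subnn expr0 mul1r /storage_cost big_seq1.
set x := 1 + delta; set k := (maxn l1 l2 - n.+1)%N.
have [lt_n_l1 lt_n_l2] := (lyre_level run1, lyre_level run2).
have le_pow m : (m <= maxn l1 l2)%N -> x ^+ (m - n.+1) <= x ^+ k.
  by move=> le_m; apply: ler_weXn2l; [rewrite lerDl | apply: leq_sub2r].
have R1 := le_trans (IH1 (tree_convex_side_u convexS))
  (ler_wpM2r (ler0n _ _) (le_pow _ (leq_maxl l1 l2))).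
have R2 := le_trans (IH2 (tree_convex_side_v vS convexS))
  (ler_wpM2r (ler0n _ _) (le_pow _ (leq_maxr l1 l2))).
rewrite /storage_cost big_cat natrD -subnSK ?(leq_trans lt_n_l1 (leq_maxl _ _)) //.
apply: le_trans (lerD R1 R2) _; rewrite -mulrDr -natrD exprSr -mulrA.
apply: ler_wpM2l; first by rewrite exprn_ge0 // addr_ge0.
apply: le_trans (_ : (#|recs_of E S| + wt E u v)%:R <= _).
  by rewrite ler_nat card_recs_of_sides.
by rewrite natrD mulrDl mul1r lerD2l.
Qed.

End LyreSplit.

Theorem theorem2 (Vt Rc : finType) (F : realFieldType) (T : rel Vt) (root : Vt)
    (E : {set Vt * Rc}) (delta : F) (blocks : seq {set Vt}) (l : nat) :
  is_rooted_tree T root ->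
  (forall r : Rc, tree_connected T [set v | (v, r) \in E]) ->
  0 < delta <= 1 ->
  lyre E T delta [set: Vt] 0 blocks l ->
  [/\ (* the output is a partition of V into nonempty blocks *)
      \bigcup_(B <- blocks) B = [set: Vt],
      pairwise (fun A B : {set Vt} => [disjoint A & B]) blocks,
      all (fun B : {set Vt} => B != set0) blocks,
      (* storage cost *)
      (storage_cost E blocks)%:R <= (1 + delta) ^+ l * (#|all_recs E|)%:R
    & (* average checkout cost *)
      (#|Vt|%:R)^-1 * (checkout_total E blocks)%:R
        <= delta^-1 * ((#|E|)%:R / (#|Vt|)%:R)].
Proof.
move=> _ recs_connected /andP[delta_gt0 _] run.
have [cover disjoint nonempty] := lyre_partition run.
split=> //.
- by apply/allP => B /(allP nonempty)/andP[].
- by have := lyre_storage (ltW delta_gt0) recs_connected run (@tree_convexT _ T); rewrite subn0.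
- rewrite [X in _ <= X]mulrC -mulrA mulrCA ler_wpM2l ?invr_ge0 ?ler0n // -nedges_setT.
  exact: lyre_checkout run.
Qed.
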